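(* Let $N=2^n$ and let $\mathcal{P}(N,K)$ be a polar code of length $N$ and dimension $K$ with frozen set $\bar{\mathcal{A}}$ ($|\bar{\mathcal{A}}|=N-K$), frozen bits set to zero. Let $\mathbf{H}'$ be the pruned parity check matrix obtained from the standard polar factor graph parity check matrix by iterating the six pruning steps described in the context until none of them applies. Then $\mathbf{H}'$ has full row rank over GF(2).
   Context: Polar code: $\mathbf{G}_N=\mathbf{B}_N\mathbf{F}^{\otimes n}$ with $\mathbf{B}_N$ the bit-reversal permutation matrix and $\mathbf{F}=\begin{bmatrix}1&0\\1&1\end{bmatrix}$; an information word $\mathbf{u}\in\mathrm{GF}(2)^N$ has $\mathbf{u}_{\bar{\mathcal{A}}}=0$ and arbitrary $\mathbf{u}_{\mathcal{A}}$ ($|\mathcal{A}|=K$), and the codeword is $\mathbf{c}^T=\mathbf{u}^T\mathbf{G}_N$. Standard factor graph: there are $n+1$ layers of $N$ binary variable nodes $v^{(0)}=\mathbf{u},v^{(1)},\dots,v^{(n)}=\mathbf{c}$ and $n$ stages of parity-check nodes; at each stage $s$, the $N$ indices are paired into $N/2$ butterflies $(a,b)$, and each butterfly contributes two checks $v^{(s)}_a\oplus v^{(s)}_b\oplus v^{(s+1)}_a=0$ and $v^{(s)}_b\oplus v^{(s+1)}_b=0$, the pairing being such that these constraints are equivalent to $\mathbf{c}^T=\mathbf{u}^T\mathbf{G}_N$. This gives a parity check matrix of size $N\log_2N\times N(1+\log_2 N)$ over all variables (the last $N$ columns corresponding to codeword variables, called channel variable nodes (CVNs); the variables of $\mathbf{u}$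 in $\bar{\mathcal{A}}$ are frozen variable nodes (FVNs); all other variables are hidden variable nodes (HVNs)). Pruning steps: (1) remove all FVN columns (they equal zero); (2) a check node of degree 1 forces its neighbor to be 0: remove the check node and that variable; (3) a CVN connected via a degree-2 check node to an HVN: remove the check node and merge the HVN into the CVN; (4) an HVN of degree 1: remove it and its check node; (5) an HVN of degree 2: remove it and merge its two check nodes into one (sum of the rows); (6) a degree-2 check node connected to two HVNs: remove the check node and merge the two HVNs. The pruned matrix is the result of applying these steps repeatedly until no step applies; it is a parity check matrix (with hidden variables) whose codeword-variable projection is the polar code. *)

From HB Require Import structures.
From mathcomp Require Import all_boot all_order all_algebra.
Set Implicit Arguments. Unset Strict Implicit. Unset Printing Implicit Defensive.
Import GRing.Theory.

(* Polar code of length N = 2^n.  Variables of the factor graph: layer    *)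
(* s in {0..n} and index i in {0..N-1}.  v^(0) is the (bit-reversed)      *)
(* information word, v^(n) = c the codeword.                               *)

Definition pvar (n : nat) : finType := ('I_n.+1 * 'I_(2 ^ n))%type.

Definition bitrev (n i : nat) : nat :=
  \sum_(k < n) (odd (i %/ 2 ^ k)) * 2 ^ (n.-1 - k).

(* G_N = B_N F^{(x)n} = F^{(x)n} applied to w := u B_N, where
   w_i = u_{bitrev i}.  The butterfly graph below computes c = w F^{(x)n},
   so layer-0 position i carries u_{bitrev i}; it is frozen iff
   bitrev i is not in the information set A. *)
Definition frozen_pos (n : nat) (A : {set 'I_(2 ^ n)}) (i : 'I_(2 ^ n)) : bool :=
  ~~ [exists a in A, val a == bitrev n i].

Definition is_cvn (n : nat) (v : pvar n) : bool := val v.1 == n.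
Definition is_fvn (n : nat) (A : {set 'I_(2 ^ n)}) (v : pvar n) : bool :=
  (val v.1 == 0) && frozen_pos A v.2.
Definition is_hvn (n : nat) (A : {set 'I_(2 ^ n)}) (v : pvar n) : bool :=
  ~~ is_cvn v && ~~ is_fvn A v.

(* A check node is the set of variables it involves (GF(2) row support). *)
Notation check n := {set pvar n}.

(* Standard factor graph: at stage s < n, butterfly (a, b = a + 2^s) for
   each a with bit s equal to 0; checks
     v^(s)_a + v^(s)_b + v^(s+1)_a = 0   and   v^(s)_b + v^(s+1)_b = 0. *)
Definition butterfly_checks (n : nat) (s : 'I_n) (a : 'I_(2 ^ n)) : seq (check n) :=
  let s0 : 'I_n.+1 := inord s in
  let s1 : 'I_n.+1 := inord s.+1 in
  let b : 'I_(2 ^ n) := insubd a (a + 2 ^ s) in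
  [:: [set (s0, a); (s0, b); (s1, a)]; [set (s0, b); (s1, b)]].

Definition init_checks (n : nat) : seq (check n) :=
  flatten [seq butterfly_checks p.1 p.2
          | p <- enum [pred p : 'I_n * 'I_(2 ^ n) | ~~ odd (p.2 %/ 2 ^ p.1)]].

(* parity check matrix over GF(2): rows = checks, columns = all variables
   (variables that were removed give zero columns). *)
Definition pcm (n : nat) (cs : seq (check n)) : 'M['F_2]_(size cs, #|pvar n|) :=
  \matrix_(i < size cs, j < #|pvar n|)
     (((enum_val j \in nth set0 cs i) : nat)%:R)%R.

Definition rem_at (T : Type) (i : nat) (s : seq T) : seq T :=
  take i s ++ drop i.+1 s.

Definition toggle (n : nat) (c : pvar n) (S : check n) : check n :=
  if c \in S then S :\ c else c |: S.

(* merge variable h into variable c (substitute h := c in every check) *)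
Definition merge_into (n : nat) (h c : pvar n) (S : check n) : check n :=
  if h \in S then toggle c (S :\ h) else S.

Definition vdeg (n : nat) (v : pvar n) (cs : seq (check n)) : nat :=
  count (fun X : check n => v \in X) cs.

Definition symdiff (n : nat) (S T : check n) : check n := (S :\: T) :|: (T :\: S).

Inductive prune_step (n : nat) (A : {set 'I_(2 ^ n)}) :
    seq (check n) -> seq (check n) -> Prop :=
  (* (1) remove an FVN column *)
  | step1 cs v : is_fvn A v -> has (fun X : check n => v \in X) cs ->
      prune_step A cs [seq X :\ v | X <- cs]
  (* (2) degree-1 check forces its neighbour to 0 *)
  | step2 cs i v : i < size cs -> nth set0 cs i = [set v] ->
      prune_step A cs [seq X :\ v | X <- rem_at i cs]
  (* (3) CVN -- degree-2 check -- HVN: merge the HVN into the CVN *)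
  | step3 cs i c h : i < size cs -> is_cvn c -> is_hvn A h ->
      nth set0 cs i = [set c; h] ->
      prune_step A cs [seq merge_into h c X | X <- rem_at i cs]
  (* (4) HVN of degree 1: remove it and its check *)
  | step4 cs h : is_hvn A h -> vdeg h cs = 1 ->
      prune_step A cs [seq X : check n <- cs | h \notin X]
  (* (5) HVN of degree 2: remove it, replace its two checks by their sum *)
  | step5 cs h : is_hvn A h -> vdeg h cs = 2 ->
      let T := [seq X : check n <- cs | h \in X] in
      prune_step A cs
        (rcons [seq X : check n <- cs | h \notin X] (symdiff (nth set0 T 0) (nth set0 T 1)))
  (* (6) degree-2 check between two HVNs: remove it, merge the HVNs *)
  | step6 cs i h1 h2 : i < size cs -> is_hvn A h1 -> is_hvn A h2 -> h1 != h2 ->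
      nth set0 cs i = [set h1; h2] ->
      prune_step A cs [seq merge_into h2 h1 X | X <- rem_at i cs].

Inductive prune_reach (n : nat) (A : {set 'I_(2 ^ n)}) :
    seq (check n) -> seq (check n) -> Prop :=
  | reach_refl cs : prune_reach A cs cs
  | reach_step cs cs' cs'' : prune_step A cs cs' -> prune_reach A cs' cs'' ->
      prune_reach A cs cs''.

Definition pruned (n : nat) (A : {set 'I_(2 ^ n)}) (H' : seq (check n)) : Prop :=
  prune_reach A (init_checks n) H' /\ forall cs, ~ prune_step A H' cs.

From mathcomp Require Import all_boot all_order all_algebra.
Set Implicit Arguments. Unset Strict Implicit. Unset Printing Implicit Defensive.
Import GRing.Theory.

(* Call a list of checks independent when no nonempty GF(2)-sum of them
   vanishes on the unfrozen variables.  The standard factor graph is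
   independent because it is triangular: each check of stage s contains a
   variable of layer s+1, its pivot, that no other check of stage at most s
   contains, so in a nonempty sum the pivot of a check of maximal stage
   survives.  Every pruning step preserves independence: step (1) only deletes
   frozen columns, steps (2), (3) and (6) eliminate a variable through a check
   of weight at most two, step (4) deletes a check and step (5) replaces two
   checks by their sum.  Independent rows have full rank. *)

Section InsertAt.
Variable T : Type.
Implicit Types (s : seq T) (x : T).

Definition ins_at i x s := take i s ++ x :: drop i s.

Lemma size_ins_at i x s : size (ins_at i x s) = (size s).+1.
Proof. by rewrite size_cat /= addnS -size_cat cat_take_drop. Qed.

Lemma size_rem_at i s : i < size s -> size (rem_at i s) = (size s).-1.
Proof.
move=> lt_i; rewrite size_cat size_take size_drop lt_i.
by case: (size s) lt_i => // m lt_i; rewrite subSS subnKC.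
Qed.

End InsertAt.

Lemma has_ins_at i b (ws : seq bool) : has id (ins_at i b ws) = b || has id ws.
Proof. by rewrite has_cat /= -{3}(cat_take_drop i ws) has_cat orbCA. Qed.

Section Parity.
Variable T : finType.
Implicit Types (X : {set T}) (cs : seq {set T}) (ws : seq bool) (u v : T).

Fixpoint parity ws cs v : bool :=
  match ws, cs with
  | w :: ws', X :: cs' => (w && (v \in X)) (+) parity ws' cs' v
  | _, _ => false
  end.

Lemma parity_map (f : {set T} -> {set T}) ws cs u a :
  (forall X, (u \in f X) = (a \in X)) -> parity ws (map f cs) u = parity ws cs a.
Proof. by move=> fE; elim: ws cs => [|w ws IH] [|X cs] //=; rewrite IH fE. Qed.

Lemma parity_map_addb (f : {set T} -> {set T}) ws cs u a b :
    (forall X, (u \in f X) = (a \in X) (+) (b \in X)) ->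
  parity ws (map f cs) u = parity ws cs a (+) parity ws cs b.
Proof.
move=> fE; elim: ws cs => [|w ws IH] [|X cs] //=; rewrite IH fE.
by case: w; case: (a \in X); case: (b \in X);
  case: (parity ws cs a); case: (parity ws cs b).
Qed.

Lemma parity_nseq_false k cs v : parity (nseq k false) cs v = false.
Proof. by elim: k cs => [|k IH] [|X cs] //=; rewrite IH. Qed.

Lemma parity_rcons ws cs b X v : size ws = size cs ->
  parity (rcons ws b) (rcons cs X) v = parity ws cs v (+) (b && (v \in X)).
Proof.
elim: ws cs => [|w ws IH] [|Y cs] //= => [_|[eq_sz]].
  by rewrite addbF.
by rewrite IH // addbA.
Qed.

Lemma parity_ins_at ws cs i b v : i < size cs -> size ws = (size cs).-1 ->
  parity (ins_at i b ws) cs v =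
    parity ws (rem_at i cs) v (+) (b && (v \in nth set0 cs i)).
Proof.
elim: cs ws i => [|X cs IH] ws [|i] //= lt_i eq_sz.
  by rewrite /ins_at take0 drop0 /rem_at /= drop0 addbC.
case: ws eq_sz => [|w ws] /=; first by case: (cs) lt_i.
move=> eq_sz; rewrite /ins_at /= -/(ins_at i b ws) IH //; last by rewrite -eq_sz.
by rewrite /rem_at /= addbA.
Qed.

Lemma parity_sum ws cs v : size ws = size cs ->
  parity ws cs v =
    odd (\sum_(i < size cs) (nth false ws i && (v \in nth set0 cs i))).
Proof.
elim: cs ws => [|X cs IH] [|w ws] //=; first by rewrite big_ord0.
by case=> eq_sz; rewrite big_ord_recl /= oddD IH //; case: (w && _).
Qed.

Fixpoint interleave (P : pred {set T}) cs ws1 ws2 : seq bool :=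
  if cs is X :: cs' then
    if P X then head false ws1 :: interleave P cs' (behead ws1) ws2
    else head false ws2 :: interleave P cs' ws1 (behead ws2)
  else [::].

Section Interleave.
Variables (P : pred {set T}) (cs : seq {set T}).

Lemma size_interleave ws1 ws2 : size (interleave P cs ws1 ws2) = size cs.
Proof. by elim: cs ws1 ws2 => //= X cs' IH ws1 ws2; case: (P X); rewrite /= IH. Qed.

Lemma parity_interleave ws1 ws2 v :
    size ws1 = count P cs -> size ws2 = count (predC P) cs ->
  parity (interleave P cs ws1 ws2) cs v =
    parity ws1 (filter P cs) v (+) parity ws2 (filter (predC P) cs) v.
Proof.
elim: cs ws1 ws2 => [|X cs' IH] ws1 ws2 /=; first by case: ws1; case: ws2.
case: (P X) => /=.
  by case: ws1 => [|w ws1] //= [sz1] sz2; rewrite IH // addbA.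
by case: ws2 => [|w ws2] //= sz1 [sz2]; rewrite IH // addbCA.
Qed.

Lemma has_interleave ws1 ws2 :
    size ws1 = count P cs -> size ws2 = count (predC P) cs ->
  has id (interleave P cs ws1 ws2) = has id ws1 || has id ws2.
Proof.
elim: cs ws1 ws2 => [|X cs' IH] ws1 ws2 /=; first by case: ws1; case: ws2.
case: (P X) => /=.
  by case: ws1 => [|w ws1] //= [sz1] sz2; rewrite IH // orbA.
by case: ws2 => [|w ws2] //= sz1 [sz2]; rewrite IH // orbCA.
Qed.

End Interleave.

End Parity.

Section Independence.
Variables (T : finType) (F : pred T).
Implicit Types (X : {set T}) (cs : seq {set T}) (ws : seq bool) (u v : T).

(* [F] marks columns that are left out (the frozen variables, known to be
   zero); this is what lets step (1) delete them. *)
Definition indep cs := forall ws, size ws = size cs ->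
  (forall v, ~~ F v -> ~~ parity ws cs v) -> ~~ has id ws.

Lemma indep_map (f : {set T} -> {set T}) cs :
    (forall X v, ~~ F v -> (v \in f X) = (v \in X)) ->
  indep cs -> indep (map f cs).
Proof.
move=> fE indep_cs ws; rewrite size_map => eq_sz par0; apply: indep_cs => // v Fv.
by rewrite -(@parity_map _ f ws cs v) ?par0 // => X; rewrite fE.
Qed.

(* The removed check [c + h] re-enters with the coefficient that cancels [h]. *)
Lemma indep_eliminate (f : {set T} -> {set T}) cs i c h :
    i < size cs -> nth set0 cs i = [set c; h] ->
    (forall X, (c \in f X) = (c \in X) (+) (h \in X)) ->
    (forall X u, u != c -> u != h -> (u \in f X) = (u \in X)) ->
  indep cs -> indep (map f (rem_at i cs)).
Proof.
move=> lt_i cs_i fc fu indep_cs ws; rewrite size_map size_rem_at // => eq_sz par0.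
set d := parity ws (rem_at i cs) h.
have := indep_cs (ins_at i d ws).
rewrite has_ins_at negb_or => /(_ _ _) /andP[] //.
  by rewrite size_ins_at eq_sz prednK // (leq_ltn_trans _ lt_i).
move=> u Fu; rewrite parity_ins_at // cs_i !inE.
have [->|u_h] := eqVneq u h; first by rewrite orbT andbT addbb.
rewrite orbF; have [u_c|u_c] := eqVneq u c.
  subst u; rewrite andbT /d -(@parity_map_addb _ f _ _ c) //.
  exact: par0.
by rewrite andbF addbF -(@parity_map _ f _ _ u) ?par0 // => X; rewrite fu.
Qed.

Lemma indep_filter P cs : indep cs -> indep (filter P cs).
Proof.
move=> indep_cs ws; rewrite size_filter => sz1 par0.
have sz2 := size_nseq (count (predC P) cs) false.
have := indep_cs (interleave P cs ws (nseq (count (predC P) cs) false)).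
rewrite size_interleave has_interleave // has_nseq andbF orbF; apply=> // v Fv.
by rewrite parity_interleave // parity_nseq_false addbF par0.
Qed.

Lemma indep_rcons_sum P cs X0 X1 X : filter (predC P) cs = [:: X0; X1] ->
    (forall v, (v \in X) = (v \in X0) (+) (v \in X1)) ->
  indep cs -> indep (rcons (filter P cs) X).
Proof.
move=> csP XE indep_cs.
case/lastP => [|ws b]; rewrite !size_rcons // => -[sz1] par0.
have sz2 : size [:: b; b] = count (predC P) cs by rewrite -size_filter csP.
rewrite size_filter in sz1.
have := indep_cs (interleave P cs ws [:: b; b]).
rewrite size_interleave has_interleave // has_rcons /= orbF orbC orbb.
apply=> // v Fv; move: (par0 v Fv); rewrite parity_interleave // csP.
rewrite parity_rcons ?size_filter // XE /=.
by case: b {par0 sz2}; rewrite ?andbF ?addbF //= ?andbT addbA.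
Qed.

Lemma indep_triangular (I : eqType) (idx : seq I) (chk : I -> {set T})
    (pivot : I -> T) (rank : I -> nat) :
    uniq idx -> {in idx, forall t, pivot t \in chk t} ->
    {in idx, forall t, ~~ F (pivot t)} ->
    {in idx &, forall t1 t2,
      t1 != t2 -> pivot t1 \in chk t2 -> rank t1 < rank t2} ->
  indep (map chk idx).
Proof.
move=> uniq_idx pivot_in pivotF pivot_rank ws; rewrite size_map => eq_sz par0.
apply/negP => /(has_nthP false) [i0 lt_i0 ws_i0]; rewrite eq_sz in lt_i0.
have t0 : I by case: (idx) lt_i0 => [|t ?].
pose sel (i : 'I_(size idx)) := nth false ws i.
have sel_i0 : sel (Ordinal lt_i0) by [].
have [im sel_im max_im] :=
  arg_maxnP (fun i : 'I_(size idx) => rank (nth t0 idx i)) sel_i0.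
set tm := nth t0 idx im; have tm_idx : tm \in idx by rewrite mem_nth.
move: (par0 _ (pivotF _ tm_idx)); rewrite parity_sum ?size_map //.
rewrite (bigD1 im) //= (nth_map t0) // (_ : nth false ws im) // (pivot_in _ tm_idx).
rewrite big1 ?addn0 // => j ne_j_im; apply/eqP; rewrite eqb0 negb_and.
case sel_j : (nth false ws j) => //=; rewrite (nth_map t0) //.
have tj_idx : nth t0 idx j \in idx by rewrite mem_nth.
have ne_tm_tj : tm != nth t0 idx j by rewrite nth_uniq // eq_sym.
apply/negP => /(pivot_rank _ _ tm_idx tj_idx ne_tm_tj).
by rewrite ltnNge => /negP; apply; exact: max_im.
Qed.

End Independence.

Section ParityCheckMatrix.
Local Open Scope ring_scope.

Definition row_bits m (x : 'rV['F_2]_m) : seq bool :=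
  [seq x 0 j != 0 | j <- enum 'I_m].

Lemma size_row_bits m (x : 'rV['F_2]_m) : size (row_bits x) = m.
Proof. by rewrite size_map size_enum_ord. Qed.

Lemma nth_row_bits m (x : 'rV['F_2]_m) (j : 'I_m) :
  nth false (row_bits x) j = (x 0 j != 0).
Proof. by rewrite (nth_map j) ?size_enum_ord // nth_ord_enum. Qed.

Lemma F2_eq_natr_neq0 (a : 'F_2) : a = (a != 0)%:R.
Proof. by case: a => [[|[|m]] lt_m] //; apply/val_inj. Qed.

Variable n : nat.

Lemma mulmx_pcm (cs : seq (check n)) (x : 'rV['F_2]_(size cs)) (v : pvar n) :
  (x *m pcm cs) 0 (enum_rank v) = (parity (row_bits x) cs v)%:R.
Proof.
rewrite !mxE parity_sum ?size_row_bits // -modn2 Fp_nat_mod // natr_sum.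
apply: eq_bigr => j _.
by rewrite /pcm mxE enum_rankK [x 0 j]F2_eq_natr_neq0 -natrM mulnb nth_row_bits.
Qed.

Lemma indep_row_free (F : pred (pvar n)) (cs : seq (check n)) :
  indep F cs -> row_free (pcm cs).
Proof.
move=> indep_cs; apply: inj_row_free => x x_ker.
have par0 v : ~~ parity (row_bits x) cs v.
  have := congr1 (fun y : 'rV_#|pvar n| => y 0 (enum_rank v)) x_ker.
  by rewrite /= mulmx_pcm mxE; case: parity => // /eqP; rewrite oner_eq0.
have := indep_cs _ (size_row_bits x) (fun v _ => par0 v).
move=> /hasPn no_bit; apply/rowP => j; rewrite mxE; apply/eqP.
have j_lt : (j < size (row_bits x))%N by rewrite size_row_bits.
by have := no_bit _ (mem_nth false j_lt); rewrite /= nth_row_bits negbK.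
Qed.

End ParityCheckMatrix.

Section Pruning.
Variables (n : nat) (A : {set 'I_(2 ^ n)}).
Implicit Types (cs : seq (check n)) (X Y : check n) (u v c h : pvar n).

Lemma mem_merge_into_target h c X : c != h ->
  (c \in merge_into h c X) = (c \in X) (+) (h \in X).
Proof.
move=> c_h; rewrite /merge_into /toggle; case: (h \in X); last by rewrite addbF.
by rewrite in_setD1 c_h /=; case: ifP => c_X; rewrite !inE eqxx ?c_X.
Qed.

Lemma mem_merge_into h c u X : u != c -> u != h ->
  (u \in merge_into h c X) = (u \in X).
Proof.
move=> u_c u_h; rewrite /merge_into /toggle; case: (h \in X) => //.
by case: ifP => _; rewrite !inE (negbTE u_c) (negbTE u_h).
Qed.

Lemma mem_symdiff X Y v : (v \in symdiff X Y) = (v \in X) (+) (v \in Y).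
Proof. by rewrite !inE; case: (v \in X); case: (v \in Y). Qed.

Lemma indep_merge (F : pred (pvar n)) cs i c h :
    i < size cs -> c != h -> nth set0 cs i = [set c; h] ->
  indep F cs -> indep F (map (merge_into h c) (rem_at i cs)).
Proof.
move=> lt_i c_h cs_i; apply: (indep_eliminate lt_i cs_i) => X.
  exact: mem_merge_into_target.
by move=> u; apply: mem_merge_into.
Qed.

Lemma prune_step_indep cs cs' :
  prune_step A cs cs' -> indep (is_fvn A) cs -> indep (is_fvn A) cs'.
Proof.
case=> {cs cs'}.
- move=> cs v fvn_v _; apply: indep_map => X u fvn_u.
  by rewrite in_setD1; case: eqVneq fvn_u => // ->; rewrite fvn_v.
- move=> cs i v lt_i cs_i; apply: (@indep_eliminate _ _ _ _ _ v v) => //.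
  + by rewrite setUid.
  + by move=> X; rewrite in_setD1 eqxx addbb.
  + by move=> X u u_v _; rewrite in_setD1 u_v.
- move=> cs i c h lt_i cvn_c hvn_h cs_i; apply: indep_merge => //.
  by apply: contraTneq hvn_h => <-; rewrite /is_hvn cvn_c.
- by move=> cs h _ _; apply: indep_filter.
- move=> cs h _ deg_h T.
  have csT : filter (predC (fun X => h \notin X)) cs = T.
    by apply: eq_filter => X /=; rewrite negbK.
  have sz_T : size T = 2 by rewrite size_filter.
  clearbody T; case: T csT sz_T => [|X0 [|X1 []]] // csT _.
  exact: indep_rcons_sum csT (mem_symdiff _ _).
- by move=> cs i h1 h2 lt_i _ _ h1_h2 cs_i; apply: indep_merge.
Qed.

Lemma prune_reach_indep cs cs' :
  prune_reach A cs cs' -> indep (is_fvn A) cs -> indep (is_fvn A) cs'.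
Proof. by elim=> // c1 c2 c3 step _ IH /(prune_step_indep step). Qed.

End Pruning.

Lemma ltn_add_unset_bit n s a :
  s < n -> ~~ odd (a %/ 2 ^ s) -> a < 2 ^ n -> a + 2 ^ s < 2 ^ n.
Proof.
move=> lt_s even_a lt_a; have pos_s : 0 < 2 ^ s by rewrite expn_gt0.
have pow_n : 2 ^ n = 2 ^ (n - s) * 2 ^ s by rewrite -expnD subnK // ltnW.
move: lt_a; rewrite pow_n -!ltn_divLR // divnDr ?dvdnn // divnn pos_s addn1 => lt_q.
rewrite ltn_neqAle lt_q andbT; apply/eqP => /(congr1 odd).
by rewrite oddS even_a oddX subn_eq0 leqNgt lt_s.
Qed.

Lemma odd_divn_add_pow2 s a : odd ((a + 2 ^ s) %/ 2 ^ s) = ~~ odd (a %/ 2 ^ s).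
Proof. by rewrite divnDr ?dvdnn // divnn expn_gt0 addn1 oddS. Qed.

Section Butterflies.
Variable n : nat.

Definition butterfly_tag := ('I_n * 'I_(2 ^ n) * nat)%type.

Definition butterfly_tags : seq butterfly_tag :=
  [seq (p, k) | p <- enum [pred p : 'I_n * 'I_(2 ^ n) | ~~ odd (p.2 %/ 2 ^ p.1)],
                k <- [:: 0; 1]].

Definition butterfly_check (t : butterfly_tag) : check n :=
  nth set0 (butterfly_checks t.1.1 t.1.2) t.2.

Definition butterfly_pivot (t : butterfly_tag) : pvar n :=
  (inord t.1.1.+1, if t.2 == 0 then t.1.2 else insubd t.1.2 (t.1.2 + 2 ^ t.1.1)).

Lemma init_checksE : init_checks n = map butterfly_check butterfly_tags.
Proof. by rewrite /init_checks map_flatten -map_comp. Qed.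

Lemma mem_butterfly_tags t : t \in butterfly_tags ->
  ~~ odd (t.1.2 %/ 2 ^ t.1.1) /\ ((t.2 == 0) || (t.2 == 1)).
Proof.
case/allpairsP => -[p k] /= [p_in k_in ->] /=.
by rewrite mem_enum in p_in; rewrite !inE in k_in.
Qed.

Lemma val_butterfly_partner (s : 'I_n) (a : 'I_(2 ^ n)) : ~~ odd (a %/ 2 ^ s) ->
  val (insubd a (a + 2 ^ s) : 'I_(2 ^ n)) = a + 2 ^ s.
Proof. by move=> even_a; rewrite val_insubd ltn_add_unset_bit. Qed.

Lemma butterfly_pivot_in t :
  t \in butterfly_tags -> butterfly_pivot t \in butterfly_check t.
Proof.
case: t => [[s a] k] /mem_butterfly_tags [_] /= /orP[] /eqP ->;
  by rewrite /butterfly_check /butterfly_pivot /butterfly_checks /= !inE eqxx ?orbT.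
Qed.

Lemma butterfly_pivot_unfrozen (A : {set 'I_(2 ^ n)}) t :
  ~~ is_fvn A (butterfly_pivot t).
Proof. by rewrite /is_fvn /= inordK // ltnS. Qed.

Lemma mem_butterfly_check t v :
    t \in butterfly_tags -> v \in butterfly_check t ->
  v.1 = inord t.1.1 \/ v = butterfly_pivot t.
Proof.
case: t => [[s a] k] /mem_butterfly_tags [_] /= /orP[] /eqP ->;
  rewrite /butterfly_check /butterfly_pivot /butterfly_checks /= !inE.
  by case/orP => [/orP[]|] /eqP ->; [left | left | right].
by case/orP => /eqP ->; [left | right].
Qed.

Lemma inord_succ_inj (s1 s2 : 'I_n) :
  inord s1.+1 = inord s2.+1 :> 'I_n.+1 -> s1 = s2.
Proof.
by move/(congr1 (@nat_of_ord _)); rewrite !inordK ?ltnS // => -[] /val_inj.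
Qed.

Lemma butterfly_pivot_inj : {in butterfly_tags &, injective butterfly_pivot}.
Proof.
move=> [[s1 a1] k1] [[s2 a2] k2].
move=> /mem_butterfly_tags [/= even1 /orP[] /eqP ->];
  move=> /mem_butterfly_tags [/= even2 /orP[] /eqP ->];
  rewrite /butterfly_pivot /= => -[/inord_succ_inj eq_s]; subst s2;
  move/(congr1 val); rewrite ?val_butterfly_partner // => eq_a.
- by rewrite (val_inj eq_a).
- by move: even1; rewrite eq_a odd_divn_add_pow2 even2.
- by move: even2; rewrite -eq_a odd_divn_add_pow2 even1.
- by rewrite (val_inj (addIn eq_a)).
Qed.

Lemma init_checks_indep (A : {set 'I_(2 ^ n)}) :
  indep (is_fvn A) (init_checks n).
Proof.
rewrite init_checksE; apply: (indep_triangular (rank := fun t => val t.1.1)).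
- apply: allpairs_uniq; [exact: enum_uniq | by [] | by move=> [? ?] [? ?]].
- exact: butterfly_pivot_in.
- by move=> t _; apply: butterfly_pivot_unfrozen.
move=> t1 t2 t1_in t2_in t1_t2 /(mem_butterfly_check t2_in) [].
  move=> /= /(congr1 (@nat_of_ord _)).
  by rewrite !inordK ?ltnS ?(ltnW (ltn_ord _)) // => ->.
by move/(butterfly_pivot_inj t1_in t2_in)/eqP; rewrite (negbTE t1_t2).
Qed.

End Butterflies.

Theorem proposition1 (n : nat) (A : {set 'I_(2 ^ n)}) (H' : seq {set pvar n}) :
  pruned A H' -> row_free (pcm H').
Proof.
case=> reach _; apply: (@indep_row_free _ (is_fvn A)).
exact: prune_reach_indep reach (init_checks_indep (A := A)).
Qed.
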